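(* Let $\lambda>\sup_{x\in\{a=0\}}\hat\lambda(x)$ and let $f\in C^1(A)$ be a bounded function satisfying $a(x)f'+H(x,f)=\lambda$ in $A$. Extend $f$ to $\mathbb R$ by $f(x):=p^+_\lambda(x)$ for $x\in\{a=0\}$. Then $u(x):=\int_0^xf(z)\,dz$ is a Lipschitz viscosity supersolution of $a(x)u''+H(x,u')=\lambda$ in $\mathbb R$.
   Context: Deterministic setting: $a:\mathbb R\to[0,1]$ with $\sqrt a$ $\kappa$-Lipschitz and (A1$'$): $a\not\equiv0$ and every connected component of $A:=\{a>0\}$ is a bounded interval. $H:\mathbb R\times\mathbb R\to\mathbb R$ in $\mathscr H_{sqc}(\alpha_0,\alpha_1,\gamma,\eta)$, $\gamma>2$, $\eta>0$: (H1) $\alpha_0|p|^\gamma-1/\alpha_0\le H(x,p)\le\alpha_1(|p|^\gamma+1)$, (H2) $|H(x,p)-H(x,q)|\le\alpha_1(|p|+|q|+1)^{\gamma-1}|p-q|$, (H3) $|H(x,p)-H(y,p)|\le\alpha_1(|p|^\gamma+1)|x-y|$, $H(x,\cdot)$ strictly quasiconvex with unique minimizer $\hat p(x)$, $H(x,p_1)-H(x,p_2)\ge\eta|p_1-p_2|$ for $p_1<p_2\le\hat p(x)$, $H(x,p_2)-H(x,p_1)\ge\eta|p_1-p_2|$ for $p_2>p_1\ge\hat p(x)$. $\hat\lambda(x):=\min_pH(x,p)$; for $\lambda\ge\hat\lambda(x)$, $\{p:H(x,p)\le\lambda\}=[p^-_\lambda(x),p^+_\lambda(x)]$. A continuous $u$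 is a viscosity supersolution of $au''+H(x,u')=\lambda$ if $a(x_0)\varphi''(x_0)+H(x_0,\varphi'(x_0))\le\lambda$ whenever a $C^2$ $\varphi$ touches $u$ from below at $x_0$. *)

From Stdlib Require Import Reals.
From mathcomp Require Import all_boot all_algebra.
From mathcomp Require Import all_classical all_reals all_analysis.
From mathcomp Require Import Rstruct Rstruct_topology.
From Coquelicot Require Import Coquelicot.
Open Scope R_scope.

(* |p|^gamma with real exponent gamma (powR 0 g = 0 for g <> 0) *)
Definition rpow (x y : R) : R := powR x y.

Definition sqrt_lipschitz (a : R -> R) (kappa : R) : Prop :=
  forall x y, Rabs (sqrt (a x) - sqrt (a y)) <= kappa * Rabs (x - y).

(* The connected component of x in A = {a>0} is {y | [min x y, max x y] ⊆ A}. *)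
Definition seg_in (P : R -> Prop) (x y : R) : Prop :=
  forall z, Rmin x y <= z <= Rmax x y -> P z.

(* (A1'): a is not identically 0 and every connected component of {a>0}
   is a bounded interval (components of subsets of R are intervals). *)
Definition A1' (a : R -> R) : Prop :=
  (exists x, a x <> 0) /\
  (forall x, 0 < a x ->
     exists M, forall y, seg_in (fun z => 0 < a z) x y -> Rabs y <= M).

Definition H_sqc (H : R -> R -> R) (alpha0 alpha1 gamma eta : R) : Prop :=
  0 < alpha0 /\
  (forall x p, alpha0 * rpow (Rabs p) gamma - 1 / alpha0 <= H x p /\
               H x p <= alpha1 * (rpow (Rabs p) gamma + 1)) /\
  (forall x p q, Rabs (H x p - H x q) <=
                 alpha1 * rpow (Rabs p + Rabs q + 1) (gamma - 1) * Rabs (p - q)) /\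
  (forall x y p, Rabs (H x p - H y p) <=
                 alpha1 * (rpow (Rabs p) gamma + 1) * Rabs (x - y)) /\
  (forall x p q t, p <> q -> 0 < t < 1 ->
     H x (t * p + (1 - t) * q) < Rmax (H x p) (H x q)) /\
  (exists phat : R -> R,
     (forall x p, H x (phat x) <= H x p) /\
     (forall x p, (forall q, H x p <= H x q) -> p = phat x) /\
     (forall x p1 p2, p1 < p2 <= phat x -> H x p1 - H x p2 >= eta * Rabs (p1 - p2)) /\
     (forall x p1 p2, phat x <= p1 < p2 -> H x p2 - H x p1 >= eta * Rabs (p1 - p2))).

Definition hat_lambda (H : R -> R -> R) (x : R) : R :=
  real (Glb_Rbar (fun v => exists p, v = H x p)).

Definition p_plus (H : R -> R -> R) (lam x : R) : R :=
  real (Lub_Rbar (fun p => H x p <= lam)).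

Definition sup_hat_lambda_zero (a : R -> R) (H : R -> R -> R) : Rbar :=
  Lub_Rbar (fun v => exists x, a x = 0 /\ v = hat_lambda H x).

Definition C1_on_A (a f : R -> R) : Prop :=
  forall x, 0 < a x -> ex_derive f x /\ continuous (Derive f) x.

Definition bounded_on_A (a f : R -> R) : Prop :=
  exists M, forall x, 0 < a x -> Rabs (f x) <= M.

Definition extend_f (a : R -> R) (H : R -> R -> R) (lam : R) (f : R -> R) (x : R) : R :=
  if Rlt_dec 0 (a x) then f x else p_plus H lam x.

Definition prim0 (g : R -> R) (t : R) : R :=
  if Rle_dec 0 t then Rintegral lebesgue_measure (fun z : R => 0 <= z <= t) g
  else - Rintegral lebesgue_measure (fun z : R => t <= z <= 0) g.

Definition lipschitz_R (u : R -> R) : Prop :=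
  exists L, forall x y, Rabs (u x - u y) <= L * Rabs (x - y).

Definition C2_R (phi : R -> R) : Prop :=
  forall x, ex_derive phi x /\ ex_derive (Derive phi) x /\
            continuous (Derive (Derive phi)) x.

Definition touches_below (phi u : R -> R) (x0 : R) : Prop :=
  phi x0 = u x0 /\
  exists d, 0 < d /\ forall y, Rabs (y - x0) < d -> phi y <= u y.

Definition visc_supersolution (a : R -> R) (H : R -> R -> R) (lam : R) (u : R -> R) : Prop :=
  (forall x, continuous u x) /\
  forall (phi : R -> R) (x0 : R), C2_R phi -> touches_below phi u x0 ->
    a x0 * Derive (Derive phi) x0 + H x0 (Derive phi x0) <= lam.

From Stdlib Require Import Reals Lra Psatz Classical.
From mathcomp Require Import all_boot all_algebra.
From mathcomp Require Import all_classical all_reals all_analysis.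
From mathcomp Require Import measurable_realfun.
From mathcomp Require Import Rstruct Rstruct_topology.
From Coquelicot Require Import Coquelicot.
Open Scope R_scope.

(* On {a > 0} the primitive u of the extension F is C^2 with u'' = f', and the
   supersolution inequality at a point where phi touches u from below is the
   second-order test for the local minimum of u - phi, combined with the equation
   for f.  At a point x0 with a x0 = 0 the claim is H(x0, phi'(x0)) <= lambda.
   Otherwise p := phi'(x0) lies, say, to the right of some q0 with
   H(x0, q0) < lambda, and by continuity and quasiconvexity H > lambda + theta on
   [p - delta, +oo) near x0.  Then F <= p - delta just to the right of x0: on
   {a = 0} because H(x, p^+(x)) <= lambda, and on {a > 0} because f' <= -theta/a
   <= -theta/(kappa^2 (x - c)^2) wherever f > p - delta (c the last zero of a
   before x), which would make the bounded f blow up at c.  So u grows with slope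
   at most p - delta to the right of x0, which is incompatible with phi <= u,
   phi x0 = u x0, phi'(x0) = p.  The other side follows by the reflection
   x |-> -x. *)

(* [u y - u x] is the integral of [F] over [[x, y]], as far as sup-norm
   estimates can tell. *)
Definition weak_primitive (F u : R -> R) : Prop :=
  forall x y c e, x <= y -> (forall t, x <= t <= y -> Rabs (F t - c) <= e) ->
  Rabs (u y - u x - c * (y - x)) <= e * (y - x).

Module LebesguePrimitive.
Import mathcomp.order.order.Order.TTheory GRing.Theory Num.Theory numFieldNormedType.Exports.
Local Open Scope classical_set_scope.
Local Open Scope ring_scope.

Definition RR : realType := R.
Notation mu := (@lebesgue_measure RR).

Lemma Rle_itvE (x y : RR) : (fun z : RR => Rle x z /\ Rle z y) = [set` `[x, y]].
Proof.
apply/funext => z; apply/propext; rewrite /= in_itv /=; split.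
  by move=> [/RleP -> /RleP ->].
by move=> /andP[/RleP ? /RleP ?].
Qed.

Lemma bounded_itv_integrable {g : RR -> RR} {K : RR} b1 b2 (x y : RR) :
  measurable_fun setT g -> (forall t, `|g t| <= K) ->
  mu.-integrable [set` Interval (BSide b1 x) (BSide b2 y)] (EFin \o g).
Proof.
move=> mg gK; apply: measurable_bounded_integrable => //.
- have /= -> := lebesgue_measure_itv (Interval (BSide b1 x) (BSide b2 y)).
  by case: ifP => // _; rewrite -EFinD ltry.
- exact: measurable_funS mg.
- exists K; split; first exact: num_real.
  by move=> M KM t _ /=; exact: le_trans (gK t) (ltW KM).
Qed.

Section Integral.
Variables (F : RR -> RR) (K : RR).
Hypotheses (mF : measurable_fun setT F) (FK : forall t, (Rabs (F t) <= K)%coqR).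

Let FK_norm t : `|F t| <= K.
Proof. by apply/RleP; rewrite -RabsE; exact: FK. Qed.

Let integrableF b1 b2 x y := bounded_itv_integrable b1 b2 x y mF FK_norm.

Let itv_int (x y : RR) := Rintegral mu [set` `[x, y]] F.

Let itv_int_split {x y z : RR} : x <= y -> y <= z -> itv_int x z = itv_int x y + itv_int y z.
Proof.
move=> xy yz; have := @Rintegral_itvB RR F (BLeft x) (BRight z) y (integrableF _ _ _ _).
rewrite !bnd_simp => /(_ xy yz).
rewrite Rintegral_itv_obnd_cbnd; last exact: integrableF.
by rewrite /itv_int => <-; rewrite addrC subrK.
Qed.

Let itv_int_bound x y c e : x <= y -> (forall t, x <= t <= y -> `|F t - c| <= e) ->
  `|itv_int x y - c * (y - x)| <= e * (y - x).
Proof.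
move=> xy Fce.
have mu_xy : fine (mu [set` `[x, y]]) = y - x.
  have /= -> := lebesgue_measure_itv `[x, y]; case: ifP => //= /negbT.
  rewrite -leNgt => yx; have -> : y = x by apply/le_anti/andP.
  by rewrite subrr.
have cst_int (r : RR) : mu.-integrable [set` `[x, y]] (EFin \o fun=> r).
  by apply: (bounded_itv_integrable (K := `|r|) _ _ _ _ (measurable_cst _)) => t; exact: lexx.
have Fc_int : mu.-integrable [set` `[x, y]] (EFin \o (fun t => F t - c)).
  apply: (bounded_itv_integrable (K := K + `|c|) _ _ _ _).
  - exact: measurable_funB (measurable_cst _).
  - by move=> t; rewrite (le_trans (ler_normB _ _)) // lerD2r.
rewrite /itv_int -mu_xy -Rintegral_cst // -RintegralB //.
rewrite (le_trans (le_normr_Rintegral _ _)) // -Rintegral_cst //.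
by apply: le_Rintegral => //; exact: integrable_norm Fc_int.
Qed.

Let prim0E t : prim0 F t = if Rle_dec 0 t then itv_int 0 t else - itv_int t 0.
Proof. by rewrite /prim0 /itv_int !Rle_itvE. Qed.

Let prim0_sub x y : x <= y -> prim0 F y - prim0 F x = itv_int x y.
Proof.
move=> xy; rewrite !prim0E.
have Rnle_le0 t : ~ Rle 0 t -> t <= 0 by move=> /Rnot_le_lt/Rlt_le/RleP.
case: (Rle_dec 0 y) => y0 /=; case: (Rle_dec 0 x) => x0 /=.
- move/RleP: x0 => x0.
  by rewrite (itv_int_split x0 xy) addrC addKr.
- move/RleP: y0 => y0; move/Rnle_le0: x0 => x0.
  by rewrite opprK (itv_int_split x0 y0) addrC.
- by case: y0; apply/RleP; apply: le_trans xy; apply/RleP.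
- move/Rnle_le0: y0 => y0; move/Rnle_le0: x0 => x0.
  by rewrite opprK (itv_int_split xy y0) addrC -addrA subrr addr0.
Qed.

Lemma prim0_weak_primitive : weak_primitive F (prim0 F).
Proof.
move=> x y c e /RleP xy Fce; apply/RleP; rewrite RabsE.
rewrite -[X in `|X - _|]/(prim0 F y - prim0 F x) prim0_sub //.
apply: itv_int_bound => // t /andP[/RleP ? /RleP ?].
by apply/RleP; rewrite -RabsE; exact: Fce.
Qed.
End Integral.

Lemma open_set_open (V : RR -> Prop) : open_set V -> topology_structure.open (V : set RR).
Proof.
move=> oV; rewrite openE => x /oV [d dV].
apply/nbhs_ballP; exists (pos d); first exact/RltP/cond_pos.
by move=> y; rewrite /ball /= => /RltP hy; apply: dV; rewrite /disc Rabs_minus_sym.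
Qed.

Lemma measurable_glue (P : RR -> Prop) (Pdec : forall x, {P x} + {~ P x})
    (V : RR -> Prop) (f g : RR -> RR) :
  open_set P -> open_set V -> (forall x, ~ P x -> V x) ->
  (forall x, P x -> continuity_pt f x) -> (forall x, V x -> continuity_pt g x) ->
  measurable_fun setT (fun x => if Pdec x then f x else g x).
Proof.
move=> /open_set_open oP /open_set_open oV PV cf cg.
rewrite -(setUCr (P : set RR)).
have mP : measurable (P : set RR) by exact: open_measurable.
apply/measurable_funU => //; first exact: measurableC.
split.
- apply: (eq_measurable_fun f).
    by move=> x; rewrite inE => Px; case: Pdec => // /(_ Px).
  apply: open_continuous_measurable_fun => // x; rewrite inE => Px.
  exact/continuity_pt_cvg/cf.
- apply: (eq_measurable_fun g).
    by move=> x; rewrite inE => nPx; case: Pdec.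
  apply: (measurable_funS (E := V)) => //; first exact: open_measurable.
  apply: open_continuous_measurable_fun => // x; rewrite inE => Vx.
  exact/continuity_pt_cvg/cg.
Qed.
End LebesguePrimitive.
Import LebesguePrimitive.

Lemma continuity_ptP f x : continuity_pt f x <->
  forall eps, 0 < eps -> exists alp, 0 < alp /\
    forall y, Rabs (y - x) < alp -> Rabs (f y - f x) < eps.
Proof.
split=> fc eps e0; have [alp [alp0 Hal]] := fc eps e0; exists alp; split=> // y.
- case: (Req_dec y x) => [-> _|yx hy]; first by rewrite Rminus_diag Rabs_R0.
  by apply: (Hal y); split; [split; [exact: I|exact: not_eq_sym]|exact: hy].
- by move=> [_ hy]; exact: Hal.
Qed.

Lemma lipschitz_continuity_pt f L x :
  (forall y z, Rabs (f y - f z) <= L * Rabs (y - z)) -> continuity_pt f x.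
Proof.
move=> fL; apply/continuity_ptP => eps e0.
have L0 := Rabs_pos L; have LL := Rle_abs L.
exists (eps / (Rabs L + 1)); split; first by apply: Rdiv_lt_0_compat; lra.
move=> y /Rlt_div_r hy; have := hy ltac:(lra); have := Rabs_pos (y - x).
have := fL y x; nra.
Qed.

Lemma is_derive_continuity_pt f x l : is_derive f x l -> continuity_pt f x.
Proof. by move=> fd; apply/continuity_pt_filterlim/ex_derive_continuous; exists l. Qed.

Lemma is_derive_lt0 {g : R -> R} {x l d : R} : is_derive g x l -> l < 0 -> 0 < d ->
  (exists t, x - d < t < x /\ g x < g t) /\ (exists t, x < t < x + d /\ g t < g x).
Proof.
move=> /is_derive_Reals gd l0 d0.
have [del Hdel] := gd (- l) ltac:(lra).
have del0 := cond_pos del.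
set h := Rmin d del / 2.
have h0 : 0 < h by have := Rmin_glb_lt d del 0 d0 del0; rewrite /h; lra.
have hd : h < d by have := Rmin_l d del; rewrite /h; lra.
have hdel : h < del by have := Rmin_r d del; rewrite /h; lra.
have incr_neg k : k <> 0 -> Rabs k < del -> (g (x + k) - g x) * k < 0.
  move=> k0 kdel; have /Rabs_lt_between [_ q0] := Hdel k k0 kdel.
  have -> : (g (x + k) - g x) * k = (g (x + k) - g x) / k * Rsqr k
    by rewrite /Rsqr; field.
  by apply: Rmult_neg_pos; [lra|exact: Rlt_0_sqr].
split.
- exists (x + - h); split; first lra.
  by have := incr_neg (- h) ltac:(lra) ltac:(rewrite Rabs_Ropp Rabs_pos_eq; lra); nra.
- exists (x + h); split; first lra.
  by have := incr_neg h ltac:(lra) ltac:(rewrite Rabs_pos_eq; lra); nra.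
Qed.

Lemma is_derive_local_min {g : R -> R} {x l r : R} : is_derive g x l -> 0 < r ->
  (forall y, Rabs (y - x) < r -> g x <= g y) -> l = 0.
Proof.
move=> gd r0 gmin.
case: (Rtotal_order l 0) => [l0|[//|l0]].
- have [_ [t [ht gt]]] := is_derive_lt0 gd l0 r0.
  by have := gmin t ltac:(rewrite Rabs_pos_eq; lra); lra.
- have gd' : is_derive (fun y => - g y) x (- l) by exact: is_derive_opp.
  have [[t [ht gt]] _] := is_derive_lt0 gd' ltac:(lra) r0.
  by have := gmin t ltac:(rewrite Rabs_left; lra); lra.
Qed.

Lemma mvt_open {g dg : R -> R} {x y : R} : x < y ->
  (forall t, x <= t <= y -> is_derive g t (dg t)) ->
  exists c, x < c < y /\ g y - g x = dg c * (y - x).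
Proof.
move=> xy gd.
have [c [E hc]] := MVT_cor2 g dg x y xy (fun t ht => proj1 (is_derive_Reals _ _ _) (gd t ht)).
by exists c.
Qed.

Lemma is_derive_le0_antimono {g dg : R -> R} {x y : R} : x <= y ->
  (forall t, x <= t <= y -> is_derive g t (dg t)) -> (forall t, x < t < y -> dg t <= 0) ->
  g y <= g x.
Proof.
move=> xy gd neg; case: (Rle_lt_or_eq_dec _ _ xy) => [lt|->]; last lra.
have [c [hc E]] := mvt_open lt gd; have := neg c hc; nra.
Qed.

Lemma is_derive_lt0_decreasing {g dg : R -> R} {x y : R} : x < y ->
  (forall t, x <= t <= y -> is_derive g t (dg t)) -> (forall t, x < t < y -> dg t < 0) ->
  g y < g x.
Proof. by move=> xy gd neg; have [c [hc E]] := mvt_open xy gd; have := neg c hc; nra. Qed.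

Lemma local_min_second_order (g g1 g2 : R -> R) x0 r : 0 < r ->
  (forall y, Rabs (y - x0) < r ->
     g x0 <= g y /\ is_derive g y (g1 y) /\ is_derive g1 y (g2 y)) ->
  continuity_pt g2 x0 -> g1 x0 = 0 /\ 0 <= g2 x0.
Proof.
move=> r0 hg cg2.
have near_x0 t : x0 <= t < x0 + r -> Rabs (t - x0) < r by move=> ?; rewrite Rabs_pos_eq; lra.
have g1x0 : g1 x0 = 0.
  have [_ [gd _]] := hg x0 (near_x0 x0 ltac:(lra)).
  exact: (is_derive_local_min gd r0 (fun y hy => proj1 (hg y hy))).
split=> //; apply: Rnot_lt_le => g2x0.
have [s [s0 Hs]] := proj1 (continuity_ptP _ _) cg2 (- g2 x0) ltac:(lra).
set h := Rmin r s / 2.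
have hr : 2 * h <= r by rewrite /h; have := Rmin_l r s; lra.
have hs : 2 * h <= s by rewrite /h; have := Rmin_r r s; lra.
have h0 : 0 < h by have := Rmin_glb_lt r s 0 r0 s0; rewrite /h; lra.
have g1neg t : x0 < t < x0 + 2 * h -> g1 t < 0.
  move=> ht; rewrite -g1x0.
  apply: (is_derive_lt0_decreasing (dg := g2)); first lra.
    by move=> y hy; case: (hg y (near_x0 y ltac:(lra))) => _ [].
  move=> y hy; have /Rabs_lt_between := Hs y ltac:(rewrite Rabs_pos_eq; lra); lra.
have : g (x0 + h) < g x0.
  apply: (is_derive_lt0_decreasing (dg := g1)); first lra.
    by move=> y hy; case: (hg y (near_x0 y ltac:(lra))) => _ [].
  move=> y hy; apply: g1neg; lra.
by have := proj1 (hg (x0 + h) (near_x0 (x0 + h) ltac:(lra))); lra.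
Qed.

Lemma le_of_decreasing_above g m z z1 : z <= z1 ->
  (forall t, z <= t <= z1 -> ex_derive g t) ->
  (forall t, z <= t <= z1 -> m < g t -> Derive g t < 0) -> m < g z1 ->
  g z1 <= g z.
Proof.
move=> zz1 gd gdec mg; apply: Rnot_lt_le => gz.
have [t_max [gmax ht_max]] : exists t, (forall y, z <= y <= z1 -> g y <= g t) /\ z <= t <= z1.
  apply: continuity_ab_maj => // t ht.
  exact: is_derive_continuity_pt (Derive_correct _ _ (gd t ht)).
have g_le := gmax z1 ltac:(lra).
have Dneg : Derive g t_max < 0 by apply: gdec => //; lra.
case: (Rle_lt_or_eq_dec _ _ (proj1 ht_max)) => [zt|zt]; last by rewrite -zt in g_le; lra.
have [[t [ht gt]] _] := is_derive_lt0 (Derive_correct _ _ (gd t_max ht_max)) Dneg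
  (d := t_max - z) ltac:(lra).
by have := gmax t ltac:(lra); lra.
Qed.

Lemma touch_below_deriv_le phi u x0 p m r : 0 < r -> is_derive phi x0 p ->
  phi x0 = u x0 ->
  (forall h, 0 < h < r -> phi (x0 + h) <= u (x0 + h) /\ u (x0 + h) - u x0 <= m * h) ->
  p <= m.
Proof.
move=> r0 /is_derive_Reals phid touch hyp; apply: Rnot_lt_le => mp.
have [del Hdel] := phid (p - m) ltac:(lra).
have del0 := cond_pos del.
set h := Rmin r del / 2.
have h0 : 0 < h by have := Rmin_glb_lt r del 0 r0 del0; rewrite /h; lra.
have hr : h < r by have := Rmin_l r del; rewrite /h; lra.
have hdel : h < del by have := Rmin_r r del; rewrite /h; lra.
have /Rabs_lt_between [quot_gt _] := Hdel h ltac:(lra) ltac:(rewrite Rabs_pos_eq; lra).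
have : m * h < phi (x0 + h) - phi x0 by apply/(Rlt_div_r _ _ _ h0); lra.
by have := hyp h ltac:(lra); lra.
Qed.

Section WeakPrimitive.
Variables (F u : R -> R) (K : R).
Hypotheses (uF : weak_primitive F u) (FK : forall t, Rabs (F t) <= K).

Lemma weak_primitive_lipschitz x y : Rabs (u x - u y) <= K * Rabs (x - y).
Proof.
have incr x' y' : x' <= y' -> Rabs (u y' - u x') <= K * (y' - x').
  move=> xy; have := uF x' y' 0 K xy; rewrite Rmult_0_l Rminus_0_r; apply.
  by move=> t _; rewrite Rminus_0_r.
case: (Rle_lt_dec x y) => xy.
- by rewrite Rabs_minus_sym (Rabs_left1 (x - y)); [rewrite Ropp_minus_distr; exact: incr|lra].
- by rewrite (Rabs_pos_eq (x - y)); [apply: incr; lra|lra].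
Qed.

Lemma weak_primitive_le x y m : x <= y -> (forall t, x <= t <= y -> F t <= m) ->
  u y - u x <= m * (y - x).
Proof.
move=> xy Fm.
have := uF x y ((m - K) / 2) ((m + K) / 2) xy.
have bounds t : x <= t <= y -> Rabs (F t - (m - K) / 2) <= (m + K) / 2.
  by move=> ht; apply/Rabs_le_between; have := Fm t ht; have /Rabs_le_between := FK t; lra.
by move=> /(_ bounds) /Rabs_le_between; lra.
Qed.
End WeakPrimitive.

Lemma weak_primitive_is_derive F u t : weak_primitive F u -> continuity_pt F t ->
  is_derive u t (F t).
Proof.
move=> uF /continuity_ptP Fc; apply/is_derive_Reals => eps e0.
have [alp [alp0 Fnear]] := Fc (eps / 2) ltac:(lra).
have close s : Rabs (s - t) < alp -> Rabs (F s - F t) <= eps / 2.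
  by move=> hs; apply: Rlt_le; exact: Fnear.
exists (mkposreal alp alp0) => h h0 /= halp.
have incr : Rabs (u (t + h) - u t - F t * h) <= eps / 2 * Rabs h.
  case: (Rle_lt_dec 0 h) => hs.
  - have := uF t (t + h) (F t) (eps / 2) ltac:(lra).
    rewrite (Rabs_pos_eq h hs) (_ : t + h - t = h); last ring.
    apply=> s hs'; apply: close; rewrite Rabs_pos_eq; [|lra].
    by rewrite Rabs_pos_eq in halp; lra.
  - have := uF (t + h) t (F t) (eps / 2) ltac:(lra).
    rewrite (Rabs_left h hs) (_ : t - (t + h) = - h); last ring.
    rewrite -Rabs_Ropp (_ : - (u t - u (t + h) - F t * - h) = u (t + h) - u t - F t * h);
      last ring.
    apply=> s hs'; apply: close; rewrite Rabs_left1; [|lra].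
    by rewrite Rabs_left in halp; lra.
have habs : 0 < Rabs h by exact: Rabs_pos_lt.
rewrite (_ : (u (t + h) - u t) / h - F t = (u (t + h) - u t - F t * h) / h);
  last by field.
rewrite Rabs_div //; apply/Rlt_div_l => //; nra.
Qed.

Lemma weak_primitive_reflect F u :
  weak_primitive F u -> weak_primitive (fun x => - F (- x)) (fun x => u (- x)).
Proof.
move=> uF x y c e xy Fc.
have := uF (- y) (- x) (- c) e ltac:(lra).
rewrite -Rabs_Ropp
  (_ : - (u (- x) - u (- y) - - c * (- x - - y)) = u (- y) - u (- x) - c * (y - x)); last ring.
rewrite (_ : - x - - y = y - x); last ring.
apply=> t ht; rewrite -Rabs_Ropp (_ : - (F t - - c) = - F (- - t) - c).
  by apply: Fc; lra.
by rewrite Ropp_involutive; ring.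
Qed.

Section Degeneracy.
Variables (a : R -> R) (kappa : R).
Hypotheses (a_ge0 : forall x, 0 <= a x) (a_lip : sqrt_lipschitz a kappa).

Lemma sqrt_lipschitz_continuity x : continuity_pt a x.
Proof.
apply: (continuity_pt_ext (fun y => sqrt (a y) * sqrt (a y))).
  by move=> y; rewrite sqrt_sqrt.
by apply: continuity_pt_mult; exact: lipschitz_continuity_pt a_lip.
Qed.

Lemma sqrt_lipschitz_quadratic c z : a c = 0 -> a z <= kappa ^ 2 * (z - c) ^ 2.
Proof.
move=> ac; have := a_lip z c; rewrite ac sqrt_0 Rminus_0_r Rabs_pos_eq; last exact: sqrt_pos.
move=> sqrt_le; rewrite -(sqrt_sqrt (a z)) // -(pow2_abs (z - c)).
by have := sqrt_pos (a z); have := Rabs_pos (z - c); nra.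
Qed.

Lemma last_zero_before x0 z1 : a x0 = 0 -> x0 < z1 -> 0 < a z1 ->
  exists c, x0 <= c < z1 /\ a c = 0 /\ forall z, c < z <= z1 -> 0 < a z.
Proof.
move=> ax0 xz1 az1.
pose E y := x0 <= y <= z1 /\ a y = 0.
have [c [c_ub c_lub]] : {c | is_lub E c}.
  by apply: completeness; [exists z1 => y [[]]|exists x0; split=> //; lra].
have x0c : x0 <= c by apply: c_ub; split=> //; lra.
have cz1 : c <= z1 by apply: c_lub => y [[]].
have ac : a c = 0.
  apply: NNPP => ac.
  have ac_pos : 0 < a c by case: (Rle_lt_or_eq_dec _ _ (a_ge0 c)) => // /esym.
  have [alp [alp0 near_c]] := proj1 (continuity_ptP _ _) (sqrt_lipschitz_continuity c)
    (a c / 2) ltac:(lra).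
  have [y [[Ey ay] yc]] : exists y, E y /\ c - alp / 2 < y.
    apply: NNPP => none; suff : c <= c - alp / 2 by lra.
    by apply: c_lub => y Ey; apply: Rnot_lt_le => yc; apply: none; exists y.
  have := c_ub y (conj Ey ay) => y_le_c.
  by have /Rabs_lt_between := near_c y ltac:(rewrite Rabs_left1; lra); rewrite ay; lra.
exists c; split; first by split=> //; case: (Rle_lt_or_eq_dec _ _ cz1) => // e; subst; lra.
split=> // z [cz zz1]; case: (Rle_lt_or_eq_dec _ _ (a_ge0 z)) => // /esym az.
have Ez : E z by split; [split; lra|].
by have := c_ub z Ez; lra.
Qed.

Lemma bounded_solution_below_level (g : R -> R) c z1 m theta M :
  c < z1 -> a c = 0 -> 0 < theta ->
  (forall z, c < z <= z1 -> 0 < a z) ->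
  (forall z, c < z <= z1 -> Rabs (g z) <= M) ->
  (forall z, c < z <= z1 -> ex_derive g z) ->
  (forall z, c < z <= z1 -> m < g z -> Derive g z <= - theta / a z) ->
  g z1 <= m.
Proof.
move=> cz1 ac theta0 apos gM gd gD; apply: Rnot_lt_le => mg.
have kappa2 : 0 < kappa ^ 2.
  have := sqrt_lipschitz_quadratic c z1 ac; have := apos z1 ltac:(lra).
  by have := pow2_ge_0 kappa; have := pow2_ge_0 (z1 - c); nra.
have gD_lt0 z : c < z <= z1 -> m < g z -> Derive g z < 0.
  move=> hz gz; have := gD z hz gz; have := apos z hz.
  by move=> az; have := Rdiv_lt_0_compat _ _ theta0 az; lra.
have above z : c < z <= z1 -> m < g z.
  move=> hz; have := le_of_decreasing_above g m z z1 (proj2 hz).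
  by move=> /(_ (fun t ht => gd t ltac:(lra)) (fun t ht => gD_lt0 t ltac:(lra)) mg); lra.
(* Since [a z <= kappa^2 (z - c)^2], the barrier [w] is nonincreasing, hence
   [g z >= w z1 + theta / (kappa^2 (z - c))] blows up as [z -> c]. *)
pose w t := g t - theta / (kappa ^ 2 * (t - c)).
pose dw t := Derive g t + theta / (kappa ^ 2 * (t - c) ^ 2).
have w_le z : c < z <= z1 -> w z1 <= w z.
  move=> hz; apply: (is_derive_le0_antimono (dg := dw)); first lra.
  - move=> t ht; rewrite /w /dw.
    have -> : Derive g t + theta / (kappa ^ 2 * (t - c) ^ 2) =
      Derive g t - (- theta / (kappa ^ 2 * (t - c) ^ 2)) by field; split; nra.
    apply: is_derive_minus; first by apply: Derive_correct; apply: gd; lra.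
    by auto_derive; [nra|field; nra].
  - move=> t ht; rewrite /dw.
    have := gD t ltac:(lra) (above t ltac:(lra)).
    have : theta / (kappa ^ 2 * (t - c) ^ 2) <= theta / a t.
      apply: Rmult_le_compat_l; first lra.
      by apply: Rinv_le_contravar; [apply: apos; lra|exact: sqrt_lipschitz_quadratic].
    lra.
pose A := Rabs (M - w z1) + 1.
have A0 : 0 < A by have := Rabs_pos (M - w z1); rewrite /A; lra.
pose del := Rmin (z1 - c) (theta / (kappa ^ 2 * A)).
have del0 : 0 < del.
  by apply: Rmin_glb_lt; [lra|apply: Rdiv_lt_0_compat => //; nra].
have del_z1 : del <= z1 - c by apply: Rmin_l.
have A_le : A <= theta / (kappa ^ 2 * del).
  have : del * (kappa ^ 2 * A) <= theta by apply/Rle_div_r; [nra|apply: Rmin_r].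
  by move=> h; apply/Rle_div_r; nra.
have w_del : w (c + del) = g (c + del) - theta / (kappa ^ 2 * del).
  by rewrite /w (_ : c + del - c = del); last ring.
have := w_le (c + del) ltac:(lra); have /Rabs_le_between := gM (c + del) ltac:(lra).
have hA : A = Rabs (M - w z1) + 1 by [].
by have := Rle_abs (M - w z1); lra.
Qed.
End Degeneracy.

Definition strictly_quasiconvex (h : R -> R) : Prop :=
  forall lo mid hi, lo < mid < hi -> h mid < Rmax (h lo) (h hi).

Definition jointly_continuous (H : R -> R -> R) : Prop :=
  forall x0 p0 eps, 0 < eps -> exists d, 0 < d /\
    forall z q, Rabs (z - x0) < d -> Rabs (q - p0) < d -> Rabs (H z q - H x0 p0) < eps.

Lemma jointly_continuous_fst {H : R -> R -> R} {eps : R} p x0 :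
  jointly_continuous H -> 0 < eps ->
  exists d, 0 < d /\ forall z, Rabs (z - x0) < d -> Rabs (H z p - H x0 p) < eps.
Proof.
move=> Hc e0; have [d [d0 Hd]] := Hc x0 p eps e0.
by exists d; split=> // z hz; apply: Hd; rewrite // Rminus_diag Rabs_R0.
Qed.

Lemma strictly_quasiconvex_increasing h lo mid hi : strictly_quasiconvex h ->
  lo < mid < hi -> h lo < h mid -> h mid < h hi.
Proof. by move=> qc hm; have := qc lo mid hi hm; rewrite /Rmax; case: Rle_dec; lra. Qed.

Lemma Lub_Rbar_bounds {E : R -> Prop} {q0 B : R} : E q0 -> (forall q, E q -> q <= B) ->
  q0 <= real (Lub_Rbar E) <= B.
Proof.
move=> Eq0 EB; have [ub lub] := Lub_Rbar_correct E.
have := ub q0 Eq0; have : Rbar_le (Lub_Rbar E) B by apply: lub.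
by case: (Lub_Rbar E).
Qed.

Lemma Lub_Rbar_approx {E : R -> Prop} {q0 B eps : R} : E q0 -> (forall q, E q -> q <= B) ->
  0 < eps -> exists q, E q /\ real (Lub_Rbar E) - eps < q.
Proof.
move=> Eq0 EB e0; apply: NNPP => none.
have [ub lub] := Lub_Rbar_correct E.
have : Rbar_le (Lub_Rbar E) (real (Lub_Rbar E) - eps).
  by apply: lub => q Eq; apply: Rnot_lt_le => lt; apply: none; exists q.
by move: (ub q0 Eq0); case: (Lub_Rbar E) => [r||] //= _; lra.
Qed.

Section Sublevel.
Variables (H : R -> R -> R) (lam B : R).
Hypotheses (H_cont : jointly_continuous H) (H_qc : forall x, strictly_quasiconvex (H x)).
Hypothesis H_coercive : forall x q, H x q <= lam -> Rabs q <= B.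

Let sublevel_le_B x q : H x q <= lam -> q <= B.
Proof. by move=> /H_coercive /Rabs_le_between []. Qed.

Lemma p_plus_bounds {x q : R} : H x q <= lam -> q <= p_plus H lam x <= B.
Proof.
by move=> hq; exact: (Lub_Rbar_bounds (E := fun p => H x p <= lam) hq (sublevel_le_B x)).
Qed.

Lemma p_plus_le {x q b : R} : H x q <= lam -> (forall q', H x q' <= lam -> q' <= b) ->
  p_plus H lam x <= b.
Proof. by move=> hq hb; case: (Lub_Rbar_bounds (E := fun p => H x p <= lam) hq hb). Qed.

Lemma p_plus_abs_le {x q : R} : H x q <= lam -> Rabs (p_plus H lam x) <= B.
Proof.
move=> hq; have [ge_q le_B] := p_plus_bounds hq.
by have /Rabs_le_between qB := H_coercive _ _ hq; apply/Rabs_le_between; lra.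
Qed.

Lemma p_plus_sublevel {x q : R} : H x q <= lam -> H x (p_plus H lam x) <= lam.
Proof.
move=> hq; set P := p_plus H lam x; apply: Rnot_lt_le => lt.
have [d [d0 Hd]] := H_cont x P (H x P - lam) ltac:(lra).
have [q' [hq' near_P]] := Lub_Rbar_approx (E := fun p => H x p <= lam) hq (sublevel_le_B x) d0.
have q'_near : P - d < q' <= P by split; [exact: near_P|case: (p_plus_bounds hq')].
have /Rabs_lt_between := Hd x q' ltac:(rewrite Rminus_diag Rabs_R0 //)
  ltac:(rewrite Rabs_left1; lra).
lra.
Qed.

Lemma sublevel_mid_lt {x lo mid hi : R} : lo < mid < hi -> H x lo <= lam -> H x hi <= lam ->
  H x mid < lam.
Proof.
move=> hm hlo hhi; have := H_qc x lo mid hi hm.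
have : Rmax (H x lo) (H x hi) <= lam by apply: Rmax_lub.
lra.
Qed.

Lemma p_plus_continuity z0 q0 : H z0 q0 < lam -> continuity_pt (p_plus H lam) z0.
Proof.
move=> hq0; apply/continuity_ptP => eps e0.
set P := p_plus H lam z0.
have [q0_le _] := p_plus_bounds (Rlt_le _ _ hq0).
have [L [[L_ge L_le] HL]] : exists L, P - eps / 2 <= L <= P /\ H z0 L < lam.
  case: (Rle_lt_dec (P - eps / 2) q0) => h; first by exists q0; split=> //; lra.
  have [q [hq q_gt]] := Lub_Rbar_approx (E := fun p => H z0 p <= lam) (eps := eps / 2)
    (Rlt_le _ _ hq0) (sublevel_le_B z0) ltac:(lra).
  have {}q_gt : P - eps / 2 < q := q_gt.
  exists (P - eps / 2); split; first lra.
  by apply: (sublevel_mid_lt (lo := q0) (hi := q)); [lra|lra|].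
have HU : lam < H z0 (P + eps / 2).
  by apply: Rnot_le_lt => h; have [] := p_plus_bounds h; rewrite -/P; lra.
have [d1 [d10 Hd1]] :=
  jointly_continuous_fst (eps := lam - H z0 L) L z0 H_cont ltac:(lra).
have [d2 [d20 Hd2]] :=
  jointly_continuous_fst (eps := H z0 (P + eps / 2) - lam) (P + eps / 2) z0 H_cont ltac:(lra).
exists (Rmin d1 d2); split; first exact: Rmin_glb_lt.
move=> y hy.
have /Rabs_lt_between HLy := Hd1 y (Rlt_le_trans _ _ _ hy (Rmin_l _ _)).
have /Rabs_lt_between HUy := Hd2 y (Rlt_le_trans _ _ _ hy (Rmin_r _ _)).
have [L_le_y _] := p_plus_bounds (x := y) (q := L) ltac:(lra).
have le_y : p_plus H lam y <= P + eps / 2.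
  apply: (p_plus_le (x := y) (q := L)); first lra.
  move=> q hq; apply: Rnot_lt_le => gt.
  have := sublevel_mid_lt (x := y) (lo := L) (mid := P + eps / 2) (hi := q).
  by move=> /(_ ltac:(lra) ltac:(lra) hq); lra.
by apply/Rabs_lt_between; lra.
Qed.
End Sublevel.

Section DegeneratePoint.
Variables (a : R -> R) (kappa : R) (H : R -> R -> R) (lam M K : R) (f F u : R -> R).
Hypotheses (a_ge0 : forall x, 0 <= a x) (a_lip : sqrt_lipschitz a kappa).
Hypotheses (H_cont : jointly_continuous H) (H_qc : forall x, strictly_quasiconvex (H x)).
Hypotheses (f_bound : forall x, 0 < a x -> Rabs (f x) <= M)
  (f_derive : forall x, 0 < a x -> ex_derive f x)
  (f_eq : forall x, 0 < a x -> a x * Derive f x + H x (f x) = lam).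
Hypotheses (F_pos : forall x, 0 < a x -> F x = f x)
  (F_zero : forall x, a x = 0 -> H x (F x) <= lam)
  (F_bound : forall x, Rabs (F x) <= K) (u_prim : weak_primitive F u).

Lemma Derive_le_of_H_gt t theta : 0 < a t -> lam + theta < H t (f t) ->
  Derive f t <= - theta / a t.
Proof.
move=> at0 hH; have -> : Derive f t = (lam - H t (f t)) / a t.
  by rewrite -(f_eq t at0); field; exact: Rgt_not_eq.
by apply: Rmult_le_compat_r; [left; exact: Rinv_0_lt_compat|lra].
Qed.

Lemma F_le_of_H_gt x0 r m theta : a x0 = 0 -> 0 < theta ->
  (forall z q, x0 <= z < x0 + r -> m <= q -> lam + theta < H z q) ->
  forall z, x0 <= z < x0 + r -> F z <= m.
Proof.
move=> ax0 theta0 high z hz.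
case: (Rle_lt_or_eq_dec _ _ (a_ge0 z)) => [az|/esym az]; last first.
  by apply: Rnot_lt_le => mF; have := high z (F z) hz (Rlt_le _ _ mF); have := F_zero z az; lra.
rewrite F_pos //.
have x0z : x0 < z by case: (Rle_lt_or_eq_dec _ _ (proj1 hz)) => // e; rewrite -e ax0 in az; lra.
have [c [[x0c cz] [ac apos]]] := last_zero_before _ _ a_ge0 a_lip _ _ ax0 x0z az.
apply: (bounded_solution_below_level _ _ a_ge0 a_lip f c z m theta M cz ac theta0 apos).
- by move=> t /apos; exact: f_bound.
- by move=> t /apos; exact: f_derive.
- move=> t ht mt; apply: Derive_le_of_H_gt; first exact: apos.
  by apply: high; lra.
Qed.

Lemma degenerate_supersolution_right x0 phi p q0 d : a x0 = 0 -> 0 < d ->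
  phi x0 = u x0 -> (forall y, Rabs (y - x0) < d -> phi y <= u y) ->
  is_derive phi x0 p -> q0 < p -> H x0 q0 < lam -> H x0 p <= lam.
Proof.
move=> ax0 d0 touch below phid q0p Hq0; apply: Rnot_lt_le => Hp.
set theta := (H x0 p - lam) / 2.
have theta0 : 0 < theta by rewrite /theta; lra.
have [d1 [d10 Hd1]] := H_cont x0 p theta theta0.
have [d2 [d20 Hd2]] :=
  jointly_continuous_fst (eps := lam - H x0 q0) q0 x0 H_cont ltac:(lra).
set rho := Rmin d1 d2.
have rho_d1 : rho <= d1 by exact: Rmin_l.
have rho_d2 : rho <= d2 by exact: Rmin_r.
(* near [x0], [H] exceeds [lam + theta] on [[p - d1/2, +oo)]: by continuity up to
   [p], and beyond [p] by quasiconvexity, since [H z q0 < lam] with [q0 < p] *)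
have high z q : x0 <= z < x0 + rho -> p - d1 / 2 <= q -> lam + theta < H z q.
  move=> hz hq; have zx0 : Rabs (z - x0) < rho by rewrite Rabs_pos_eq; lra.
  have Hzp : lam + theta < H z p.
    have /Rabs_lt_between := Hd1 z p ltac:(lra) ltac:(rewrite Rminus_diag Rabs_R0; lra).
    by rewrite /theta; lra.
  case: (Rle_lt_dec q p) => qp.
    have /Rabs_lt_between := Hd1 z q ltac:(lra) ltac:(rewrite Rabs_left1; lra).
    by rewrite /theta; lra.
  have /Rabs_lt_between Hzq0 := Hd2 z ltac:(lra).
  by have := strictly_quasiconvex_increasing _ q0 p q (H_qc z) ltac:(lra) ltac:(lra); lra.
have F_le := F_le_of_H_gt x0 rho (p - d1 / 2) theta ax0 theta0 high.
have : p <= p - d1 / 2.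
  apply: (touch_below_deriv_le phi u x0 p (p - d1 / 2) (Rmin d rho)) => //.
    by apply: Rmin_glb_lt => //; apply: Rmin_glb_lt.
  move=> h hh; have hd := Rmin_l d rho; have hrho := Rmin_r d rho; split.
    by apply: below; rewrite (_ : x0 + h - x0 = h); [rewrite Rabs_pos_eq; lra|ring].
  have := weak_primitive_le _ _ _ u_prim F_bound x0 (x0 + h) (p - d1 / 2) ltac:(lra)
    (fun t ht => F_le t ltac:(lra)).
  by rewrite (_ : x0 + h - x0 = h); last ring.
lra.
Qed.
End DegeneratePoint.

Lemma is_derive_reflect (g : R -> R) x l :
  is_derive g (- x) l -> is_derive (fun y => g (- y)) x (- l).
Proof.
move=> gd; have -> : - l = scal (-1) l by rewrite /scal /= /mult /=; ring.
by apply: (is_derive_comp g (fun y => - y)) => //; auto_derive.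
Qed.

Section Reflection.
Variables (a : R -> R) (kappa : R) (H : R -> R -> R) (lam M K : R) (f F u : R -> R).
Hypotheses (a_ge0 : forall x, 0 <= a x) (a_lip : sqrt_lipschitz a kappa).
Hypotheses (H_cont : jointly_continuous H) (H_qc : forall x, strictly_quasiconvex (H x)).
Hypotheses (f_bound : forall x, 0 < a x -> Rabs (f x) <= M)
  (f_derive : forall x, 0 < a x -> ex_derive f x)
  (f_eq : forall x, 0 < a x -> a x * Derive f x + H x (f x) = lam).
Hypotheses (F_pos : forall x, 0 < a x -> F x = f x)
  (F_zero : forall x, a x = 0 -> H x (F x) <= lam)
  (F_bound : forall x, Rabs (F x) <= K) (u_prim : weak_primitive F u).

Let Rabs_reflect x y : Rabs (- x - y) = Rabs (x - - y).
Proof. by rewrite -Rabs_Ropp; congr Rabs; ring. Qed.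

Lemma degenerate_supersolution_left x0 phi p q0 d : a x0 = 0 -> 0 < d ->
  phi x0 = u x0 -> (forall y, Rabs (y - x0) < d -> phi y <= u y) ->
  is_derive phi x0 p -> p < q0 -> H x0 q0 < lam -> H x0 p <= lam.
Proof.
move=> ax0 d0 touch below phid pq0 Hq0.
have fd x : 0 < a (- x) -> is_derive (fun y => - f (- y)) x (Derive f (- x)).
  move=> ax; rewrite -[X in is_derive _ _ X]Ropp_involutive.
  exact/is_derive_opp/is_derive_reflect/Derive_correct/f_derive.
rewrite -(Ropp_involutive x0) -(Ropp_involutive p).
apply: (degenerate_supersolution_right (fun x => a (- x)) kappa (fun x q => H (- x) (- q))
  lam M K (fun x => - f (- x)) (fun x => - F (- x)) (fun x => u (- x))
  _ _ _ _ _ _ _ _ _ _ _ (- x0) (fun y => phi (- y)) (- p) (- q0) d).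
- by move=> x; exact: a_ge0.
- by move=> x y; have := a_lip (- x) (- y); rewrite Rabs_reflect Ropp_involutive.
- move=> x1 p1 eps e0; have [d' [d'0 Hd']] := H_cont (- x1) (- p1) eps e0.
  by exists d'; split=> // z q hz hq; apply: Hd'; rewrite Rabs_reflect Ropp_involutive.
- move=> x lo mid hi hm; rewrite Rmax_comm; apply: H_qc; lra.
- by move=> x /f_bound; rewrite Rabs_Ropp.
- by move=> x /fd fdx; exists (Derive f (- x)).
- by move=> x ax; rewrite (is_derive_unique _ _ _ (fd x ax)) Ropp_involutive; exact: f_eq.
- by move=> x /F_pos ->.
- by move=> x /F_zero; rewrite Ropp_involutive.
- by move=> x; rewrite Rabs_Ropp.
- exact: weak_primitive_reflect.
- by rewrite Ropp_involutive.
- by [].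
- by rewrite Ropp_involutive.
- by move=> y hy; apply: below; rewrite Rabs_reflect.
- by apply: is_derive_reflect; rewrite Ropp_involutive.
- lra.
- by rewrite !Ropp_involutive.
Qed.

Lemma degenerate_supersolution x0 phi p : a x0 = 0 -> (exists q0, H x0 q0 < lam) ->
  touches_below phi u x0 -> is_derive phi x0 p -> H x0 p <= lam.
Proof.
move=> ax0 [q0 Hq0] [touch [d [d0 below]]] phid.
case: (Rtotal_order q0 p) => [q0p|[<-|pq0]].
- exact: (degenerate_supersolution_right a kappa H lam M K f F u a_ge0 a_lip H_cont H_qc
    f_bound f_derive f_eq F_pos F_zero F_bound u_prim x0 phi p q0 d).
- lra.
- exact: (degenerate_supersolution_left x0 phi p q0 d).
Qed.
End Reflection.

Section PositivePoint.
Variables (a : R -> R) (kappa : R) (H : R -> R -> R) (lam : R) (f F u : R -> R).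
Hypotheses (a_ge0 : forall x, 0 <= a x) (a_lip : sqrt_lipschitz a kappa).
Hypotheses (f_C1 : C1_on_A a f)
  (f_eq : forall x, 0 < a x -> a x * Derive f x + H x (f x) = lam).
Hypotheses (F_pos : forall x, 0 < a x -> F x = f x) (u_prim : weak_primitive F u).

Lemma positive_supersolution x0 phi : 0 < a x0 -> C2_R phi -> touches_below phi u x0 ->
  a x0 * Derive (Derive phi) x0 + H x0 (Derive phi x0) <= lam.
Proof.
move=> ax0 phiC2 [touch [d [d0 below]]].
have phid x : ex_derive phi x by case: (phiC2 x).
have phi'd x : ex_derive (Derive phi) x by case: (phiC2 x) => _ [].
have phi''c : continuity_pt (Derive (Derive phi)) x0.
  by apply/continuity_pt_filterlim; case: (phiC2 x0) => _ [].
have [r [r0 Hr]] := proj1 (continuity_ptP _ _) (sqrt_lipschitz_continuity _ _ a_ge0 a_lip x0)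
  (a x0) ax0.
have apos y : Rabs (y - x0) < r -> 0 < a y.
  by move=> /Hr /Rabs_lt_between; lra.
have u_deriv y : Rabs (y - x0) < r -> is_derive u y (f y).
  move=> hy; rewrite -F_pos; last exact: apos.
  apply: weak_primitive_is_derive => //.
  apply: (continuity_pt_locally_ext f F (r - Rabs (y - x0))); first lra.
    move=> z hz; rewrite F_pos //; apply: apos.
    by have := Rabs_triang (z - y) (y - x0); rewrite /Rdist in hz;
      rewrite (_ : z - y + (y - x0) = z - x0); [lra|ring].
  by apply/is_derive_continuity_pt/Derive_correct; case: (f_C1 y (apos y hy)).
have [f_phi' phi''_le] : f x0 - Derive phi x0 = 0 /\ 0 <= Derive f x0 - Derive (Derive phi) x0.
  apply: (local_min_second_order (fun y => u y - phi y) (fun y => f y - Derive phi y)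
    (fun y => Derive f y - Derive (Derive phi) y) x0 (Rmin d r)).
  - exact: Rmin_glb_lt.
  - move=> y hy; have hyd := Rlt_le_trans _ _ _ hy (Rmin_l d r).
    have hyr := Rlt_le_trans _ _ _ hy (Rmin_r d r).
    split; first by have := below y hyd; lra.
    split; apply: is_derive_minus; try exact: Derive_correct.
    + exact: u_deriv.
    + exact/Derive_correct/(proj1 (f_C1 y (apos y hyr))).
  - exact/continuity_pt_minus/phi''c/continuity_pt_filterlim/(proj2 (f_C1 x0 ax0)).
have := f_eq x0 ax0; rewrite (_ : Derive phi x0 = f x0); [nra|lra].
Qed.
End PositivePoint.

Lemma rpow_ge0 x y : 0 <= rpow x y.
Proof. by apply/RleP; exact: powR_ge0. Qed.

Lemma rpow_le x y r : 0 <= r -> 0 <= x -> x <= y -> rpow x r <= rpow y r.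
Proof.
move=> /RleP r0 /RleP x0 /RleP xy; apply/RleP; rewrite /rpow.
apply: (ge0_ler_powR r0) => //; rewrite Num.Theory.nnegrE //.
exact: (mathcomp.order.order.Order.POrderTheory.le_trans x0 xy).
Qed.

Lemma rpow_ge_base x r : 1 <= x -> 1 <= r -> x <= rpow x r.
Proof. by move=> /RleP x1 /RleP r1; apply/RleP; exact: le1r_powR. Qed.

Section HsqcConsequences.
Variables (H : R -> R -> R) (alpha0 alpha1 gamma eta : R).
Hypothesis Hsqc : H_sqc H alpha0 alpha1 gamma eta.

Lemma H_sqc_strictly_quasiconvex x : strictly_quasiconvex (H x).
Proof.
move=> lo mid hi hm; have [_ [_ [_ [_ [qc _]]]]] := Hsqc.
set t := (hi - mid) / (hi - lo).
have t01 : 0 < t < 1.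
  by rewrite /t; split; [apply: Rdiv_lt_0_compat|apply/Rlt_div_l]; lra.
have -> : mid = t * lo + (1 - t) * hi by rewrite /t; field; lra.
by apply: qc => //; lra.
Qed.

Lemma H_sqc_jointly_continuous : 1 <= gamma -> jointly_continuous H.
Proof.
move=> gamma1 x0 p0 eps e0; have [_ [_ [H2 [H3 _]]]] := Hsqc.
set C := Rabs alpha1 * (rpow (2 * Rabs p0 + 2) (gamma - 1) + rpow (Rabs p0) gamma + 1) + 1.
have C1 : 1 <= C.
  have := Rabs_pos alpha1; have := rpow_ge0 (2 * Rabs p0 + 2) (gamma - 1).
  have := rpow_ge0 (Rabs p0) gamma; rewrite /C; nra.
exists (Rmin 1 (eps / (2 * C))); split.
  by apply: Rmin_glb_lt; [lra|apply: Rdiv_lt_0_compat; lra].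
move=> z q hz hq.
have d1 := Rmin_l 1 (eps / (2 * C)); have d2 := Rmin_r 1 (eps / (2 * C)).
have Cd : 2 * C * Rmin 1 (eps / (2 * C)) <= eps.
  by rewrite Rmult_comm; apply/Rle_div_r; lra.
have near_p0 : rpow (Rabs q + Rabs p0 + 1) (gamma - 1) <= rpow (2 * Rabs p0 + 2) (gamma - 1).
  apply: rpow_le; first lra; first by have := Rabs_pos q; have := Rabs_pos p0; lra.
  by have := Rabs_triang_inv q p0; lra.
have step_p : Rabs (H z q - H z p0) <= C * Rabs (q - p0).
  apply: (Rle_trans _ _ _ (H2 z q p0)); apply: Rmult_le_compat_r; first exact: Rabs_pos.
  have := Rle_abs alpha1; have := Rabs_pos alpha1; have := rpow_ge0 (Rabs p0) gamma.
  have := rpow_ge0 (Rabs q + Rabs p0 + 1) (gamma - 1); rewrite /C; nra.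
have step_x : Rabs (H z p0 - H x0 p0) <= C * Rabs (z - x0).
  apply: (Rle_trans _ _ _ (H3 z x0 p0)); apply: Rmult_le_compat_r; first exact: Rabs_pos.
  have := Rle_abs alpha1; have := Rabs_pos alpha1; have := rpow_ge0 (Rabs p0) gamma.
  have := rpow_ge0 (2 * Rabs p0 + 2) (gamma - 1); rewrite /C; nra.
have := Rabs_triang (H z q - H z p0) (H z p0 - H x0 p0).
rewrite (_ : H z q - H z p0 + (H z p0 - H x0 p0) = H z q - H x0 p0); last ring.
by have := Rabs_pos (q - p0); have := Rabs_pos (z - x0); nra.
Qed.

Lemma H_sqc_sublevel_bounded lam : 1 <= gamma ->
  forall x q, H x q <= lam -> Rabs q <= Rmax 1 ((lam + 1 / alpha0) / alpha0).
Proof.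
move=> gamma1 x q hq; have [alpha0_pos [H1 _]] := Hsqc.
case: (Rle_lt_dec (Rabs q) 1) => q1; first exact: Rle_trans q1 (Rmax_l _ _).
apply: Rle_trans (Rmax_r _ _); apply/Rle_div_r => //.
have := rpow_ge_base (Rabs q) gamma ltac:(lra) gamma1.
by have [H1q _] := H1 x q; nra.
Qed.

Lemma H_sqc_sublevel_nonempty (a : R -> R) (lam : R) :
  Rbar_lt (sup_hat_lambda_zero a H) (Finite lam) ->
  forall x, a x = 0 -> exists q, H x q < lam.
Proof.
move=> hsup x ax; have [_ [_ [_ [_ [_ [phat [Hmin _]]]]]]] := Hsqc.
exists (phat x).
have hat_lambdaE : hat_lambda H x = H x (phat x).
  rewrite /hat_lambda (is_glb_Rbar_unique _ (H x (phat x))) //.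
  by split=> [_ [p ->]|b hb]; [exact: Hmin|apply: hb; exists (phat x)].
have [ub _] := Lub_Rbar_correct (fun v => exists x, a x = 0 /\ v = hat_lambda H x).
have := ub (hat_lambda H x) (ex_intro _ x (conj ax erefl)).
move: hsup; rewrite /sup_hat_lambda_zero hat_lambdaE.
by case: (Lub_Rbar _) => [r||] //= h1 h2; lra.
Qed.
End HsqcConsequences.

Section Extension.
Variables (a : R -> R) (kappa : R) (H : R -> R -> R) (lam M B : R) (f : R -> R).
Hypotheses (a_ge0 : forall x, 0 <= a x) (a_lip : sqrt_lipschitz a kappa).
Hypotheses (H_cont : jointly_continuous H) (H_qc : forall x, strictly_quasiconvex (H x))
  (H_coercive : forall x q, H x q <= lam -> Rabs q <= B)
  (H_zero : forall x, a x = 0 -> exists q, H x q < lam).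
Hypotheses (f_C1 : C1_on_A a f) (f_bound : forall x, 0 < a x -> Rabs (f x) <= M).

Lemma extend_f_pos x : 0 < a x -> extend_f a H lam f x = f x.
Proof. by rewrite /extend_f; case: Rlt_dec. Qed.

Lemma extend_f_zero x : a x = 0 -> extend_f a H lam f x = p_plus H lam x.
Proof. by move=> ax; rewrite /extend_f; case: Rlt_dec => // h; exfalso; lra. Qed.

Lemma extend_f_sublevel x : a x = 0 -> H x (extend_f a H lam f x) <= lam.
Proof.
move=> ax; have [q /Rlt_le hq] := H_zero x ax.
by rewrite extend_f_zero //; exact: (p_plus_sublevel _ _ _ H_cont H_coercive hq).
Qed.

Lemma extend_f_bound x : Rabs (extend_f a H lam f x) <= Rmax M B.
Proof.
case: (Rle_lt_or_eq_dec _ _ (a_ge0 x)) => [ax|/esym ax].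
  by rewrite extend_f_pos //; exact: Rle_trans (f_bound x ax) (Rmax_l _ _).
have [q /Rlt_le hq] := H_zero x ax.
by rewrite extend_f_zero //; exact: Rle_trans (p_plus_abs_le _ _ _ H_coercive hq) (Rmax_r _ _).
Qed.

Lemma extend_f_measurable : measurable_fun setT (extend_f a H lam f : RR -> RR).
Proof.
apply: (measurable_glue (fun x => 0 < a x) (fun x => Rlt_dec 0 (a x))
  (fun x => exists q, H x q < lam)).
- move=> x ax; have [r [r0 Hr]] := proj1 (continuity_ptP _ _)
    (sqrt_lipschitz_continuity _ _ a_ge0 a_lip x) (a x) ax.
  by exists (mkposreal r r0) => y /Hr /Rabs_lt_between; lra.
- move=> x [q hq]; have [r [r0 Hr]] :=
    jointly_continuous_fst (eps := lam - H x q) q x H_cont ltac:(lra).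
  by exists (mkposreal r r0) => y /Hr /Rabs_lt_between hy; exists q; lra.
- by move=> x ax; apply: H_zero; have := a_ge0 x; lra.
- by move=> x /f_C1 [fd _]; exact: is_derive_continuity_pt (Derive_correct _ _ fd).
- by move=> x [q]; exact: (p_plus_continuity _ _ _ H_cont H_qc H_coercive).
Qed.
End Extension.

Theorem mainTheorem15 (a : R -> R) (kappa : R) (H : R -> R -> R)
  (alpha0 alpha1 gamma eta lam : R) (f : R -> R) :
  (forall x : R, 0 <= a x <= 1) ->
  sqrt_lipschitz a kappa ->
  A1' a ->
  2 < gamma -> 0 < eta ->
  H_sqc H alpha0 alpha1 gamma eta ->
  Rbar_lt (sup_hat_lambda_zero a H) (Finite lam) ->
  C1_on_A a f ->
  bounded_on_A a f ->
  (forall x : R, 0 < a x -> a x * Derive f x + H x (f x) = lam) ->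
  lipschitz_R (prim0 (extend_f a H lam f)) /\
  visc_supersolution a H lam (prim0 (extend_f a H lam f)).
Proof.
move=> a01 a_lip _ gamma2 _ Hsqc hsup f_C1 [M f_bound] f_eq.
have a_ge0 x : 0 <= a x by case: (a01 x).
have gamma1 : 1 <= gamma by lra.
have H_qc := H_sqc_strictly_quasiconvex _ _ _ _ _ Hsqc.
have H_cont := H_sqc_jointly_continuous _ _ _ _ _ Hsqc gamma1.
have H_coercive := H_sqc_sublevel_bounded _ _ _ _ _ Hsqc lam gamma1.
have H_zero := H_sqc_sublevel_nonempty _ _ _ _ _ Hsqc _ _ hsup.
have F_bound := extend_f_bound _ _ _ _ _ _ a_ge0 H_coercive H_zero f_bound.
have u_prim := prim0_weak_primitive _ _
  (extend_f_measurable _ _ _ _ _ _ a_ge0 a_lip H_cont H_qc H_coercive H_zero f_C1) F_bound.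
have u_lip := weak_primitive_lipschitz _ _ _ u_prim F_bound.
split; first by eexists; exact: u_lip.
split=> [x|phi x0 phiC2 touch]; first exact/continuity_pt_filterlim/lipschitz_continuity_pt.
case: (Rle_lt_or_eq_dec _ _ (a_ge0 x0)) => [ax0|/esym ax0].
- exact: (positive_supersolution _ _ _ _ _ _ _ a_ge0 a_lip f_C1 f_eq
    (extend_f_pos _ _ _ _) u_prim).
- rewrite ax0 Rmult_0_l Rplus_0_l.
  apply: (degenerate_supersolution _ _ _ _ _ _ _ _ _ a_ge0 a_lip H_cont H_qc f_bound
    (fun x ax => proj1 (f_C1 x ax)) f_eq (extend_f_pos _ _ _ _)
    (extend_f_sublevel _ _ _ _ _ H_cont H_coercive H_zero) F_bound u_prim x0 phi _ ax0
    (H_zero x0 ax0) touch).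
  by apply: Derive_correct; case: (phiC2 x0).
Qed.
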